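(* The edge set of the complete graph $K_{16}$ can be partitioned into five subgraphs each isomorphic to $P_4 \square P_4$.
   Context: $P_n$ denotes the path graph on $n$ vertices and $K_m$ the complete graph on $m$ vertices. For graphs $G=(V,E)$ and $G'=(V',E')$, the Cartesian product $G \square G'$ has vertex set $V\times V'$, with $\{(v,v'),(w,w')\}$ an edge iff either $\{v,w\}\in E$ and $v'=w'$, or $v=w$ and $\{v',w'\}\in E'$. Thus $P_4\square P_4$ is the $4\times 4$ grid graph with 16 vertices and 24 edges. *)

From mathcomp Require Import all_boot.
Set Implicit Arguments. Unset Strict Implicit. Unset Printing Implicit Defensive.

Definition path_adj (n : nat) : rel 'I_n :=
  fun i j => (i.+1 == j) || (j.+1 == i).

Definition cart_adj (T U : finType) (e : rel T) (e' : rel U) : rel (T * U) :=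
  fun x y => (e x.1 y.1 && (x.2 == y.2)) || ((x.1 == y.1) && e' x.2 y.2).

Definition grid_adj : rel ('I_4 * 'I_4) := cart_adj (@path_adj 4) (@path_adj 4).

Definition edge_set (V : finType) (e : rel V) : {set {set V}} :=
  [set [set x; y] | x in V, y in V & e x y].

Definition K_edges (m : nat) : {set {set 'I_m}} :=
  [set [set x; y] | x in 'I_m, y in 'I_m & x != y].

Definition iso_to_grid (E : {set {set 'I_16}}) : Prop :=
  exists f : 'I_4 * 'I_4 -> 'I_16,
    injective f /\ E = [set f @: A | A : {set 'I_4 * 'I_4} in edge_set grid_adj].

From mathcomp Require Import all_boot zmodp.
Set Implicit Arguments. Unset Strict Implicit. Unset Printing Implicit Defensive.

(* The permutation rho of the vertices of K_16 that fixes 0 and cycles 1..5,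
   6..10 and 11..15 has order 5, and no nontrivial power of it fixes an edge
   (its square, again a nontrivial power, would fix both ends, but only 0 is
   fixed), so the 120 edges of K_16 fall into 24 orbits of size 5.  If a copy
   of the 4x4 grid, which has 24 edges, meets every orbit exactly once, then
   its images under rho^0, ..., rho^4 partition the edges of K_16, and such a
   copy exists. *)

Section EdgeSets.
Variable V : finType.
Implicit Types (e : rel V) (x y a b : V).

Lemma eq_set2 x y a b :
  [set x; y] = [set a; b] -> (x == a) && (y == b) || (x == b) && (y == a).
Proof.
move=> eq_xy_ab.
have: x \in [set a; b] by rewrite -eq_xy_ab set21.
have: y \in [set a; b] by rewrite -eq_xy_ab set22.
have: a \in [set x; y] by rewrite eq_xy_ab set21.
have: b \in [set x; y] by rewrite eq_xy_ab set22.
rewrite !inE.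
by do 4 case/orP=> /eqP ?; subst; rewrite ?eqxx ?orbT.
Qed.

Lemma edge_setP e E : reflect (exists x y, e x y /\ E = [set x; y]) (E \in edge_set e).
Proof.
apply: (iffP imset2P) => [[x y _]|[x [y [exy ->]]]].
  by rewrite inE => exy ->; exists x, y.
by exists x y; rewrite ?inE.
Qed.

Lemma mem_edge_set e x y : symmetric e -> ([set x; y] \in edge_set e) = e x y.
Proof.
move=> e_sym; apply/edge_setP/idP => [[a [b [eab /eq_set2]]]|exy]; last by exists x, y.
by case/orP=> /andP[/eqP-> /eqP->]; rewrite // e_sym.
Qed.

Lemma disjoint_edge_set e e' :
  symmetric e' -> (forall x y, e x y -> ~~ e' x y) -> [disjoint edge_set e & edge_set e'].
Proof.
move=> e'_sym e_not_e'; apply/pred0P => E /=.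
apply/negbTE/andP => -[/edge_setP[x [y [exy ->]]]].
by rewrite mem_edge_set // (negbTE (e_not_e' x y exy)).
Qed.

Lemma bigcup_edge_set (I : finType) (E : I -> rel V) e :
  (forall i x y, E i x y -> e x y) -> (forall x y, e x y -> exists i, E i x y) ->
  \bigcup_i edge_set (E i) = edge_set e.
Proof.
move=> sub_e cover_e; apply/setP => A; apply/bigcupP/edge_setP.
  by case=> i _ /edge_setP[x [y [Exy ->]]]; exists x, y; split; first exact: sub_e Exy.
case=> x [y [exy ->]]; have [i Exy] := cover_e x y exy.
by exists i => //; apply/edge_setP; exists x, y.
Qed.

End EdgeSets.

Definition arcs (T : eqType) (e : rel T) (s : seq T) : seq (T * T) :=
  [seq ab <- [seq (a, b) | a <- s, b <- s] | e ab.1 ab.2].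

Section ImageRelation.
Variables (U V : finType) (f : U -> V) (e : rel U).

Definition image_rel : rel V :=
  fun x y => [exists a, exists b, [&& f a == x, f b == y & e a b]].

Lemma image_relP x y : reflect (exists a b, [/\ f a = x, f b = y & e a b]) (image_rel x y).
Proof.
apply: (iffP existsP) => [[a /existsP[b /and3P[/eqP fa /eqP fb eab]]]|[a [b [fa fb eab]]]].
  by exists a, b.
by exists a; apply/existsP; exists b; rewrite fa fb !eqxx.
Qed.

Lemma image_rel_sym : symmetric e -> symmetric image_rel.
Proof.
move=> e_sym x y; apply/image_relP/image_relP => -[a [b [fa fb eab]]];
  by exists b, a; rewrite e_sym.
Qed.

Lemma image_rel_neq x y : injective f -> irreflexive e -> image_rel x y -> x != y.
Proof.
move=> f_inj e_irr /image_relP[a [b [<- <- eab]]].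
by rewrite (inj_eq f_inj); apply: contraTneq eab => ->; rewrite e_irr.
Qed.

Lemma edge_set_image : [set f @: A | A : {set U} in edge_set e] = edge_set image_rel.
Proof.
apply/setP => E; apply/imsetP/edge_setP => [[A /edge_setP[a [b [eab ->]]] ->]|].
  exists (f a), (f b); split; first by apply/image_relP; exists a, b.
  by rewrite imsetU1 imset_set1.
case=> x [y /= [/image_relP[a [b [<- <- eab]]] ->]].
by exists [set a; b]; [apply/edge_setP; exists a, b | rewrite imsetU1 imset_set1].
Qed.

Lemma image_relE (s : seq U) x y :
  (forall a, a \in s) ->
  image_rel x y = ((x, y) \in [seq (f ab.1, f ab.2) | ab <- arcs e s]).
Proof.
move=> s_full; apply/image_relP/mapP => [[a [b [<- <- eab]]]|[[a b]]].
  by exists (a, b); rewrite // mem_filter eab allpairs_f.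
by rewrite mem_filter => /andP[eab _] [-> ->]; exists a, b.
Qed.

End ImageRelation.

Lemma path_adj_sym n : symmetric (@path_adj n).
Proof. by move=> i j; rewrite /path_adj orbC. Qed.

Lemma path_adj_irr n : irreflexive (@path_adj n).
Proof. by move=> i; rewrite /path_adj orbb eqn_leq ltnn. Qed.

Lemma cart_adj_sym (T U : finType) (e : rel T) (e' : rel U) :
  symmetric e -> symmetric e' -> symmetric (cart_adj e e').
Proof.
by move=> e_sym e'_sym x y; rewrite /cart_adj e_sym e'_sym [y.1 == _]eq_sym [y.2 == _]eq_sym.
Qed.

Lemma cart_adj_irr (T U : finType) (e : rel T) (e' : rel U) :
  irreflexive e -> irreflexive e' -> irreflexive (cart_adj e e').
Proof. by move=> e_irr e'_irr x; rewrite /cart_adj e_irr e'_irr andbF. Qed.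

Lemma grid_adj_sym : symmetric grid_adj.
Proof. exact: cart_adj_sym (@path_adj_sym 4) (@path_adj_sym 4). Qed.

Lemma grid_adj_irr : irreflexive grid_adj.
Proof. exact: cart_adj_irr (@path_adj_irr 4) (@path_adj_irr 4). Qed.

(* [enum 'I_n] goes through [insub], whose opaque proofs block [vm_compute],
   whereas the value of an [inZp] ordinal reduces; hence [ords], and [inZp]
   rather than [inord] in the labels. *)
Definition ords n : seq 'I_n.+1 := mkseq inZp n.+1.

Lemma mem_ords n (i : 'I_n.+1) : i \in ords n.
Proof. by apply/mapP; exists (val i); rewrite ?valZpK // mem_iota ltn_ord. Qed.

Definition base_label (p : 'I_4 * 'I_4) : 'I_16 :=
  inZp (nth 0 (nth [::] [:: [:: 5; 14;  9; 7];
                            [:: 13; 2;  3; 6];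
                            [:: 10; 12; 8; 4];
                            [:: 11; 15; 0; 1]] p.1) p.2).

Definition rho (x : 'I_16) : 'I_16 :=
  inZp (if x == 0 :> nat then 0 else if 5 %| x then x - 4 else x.+1).

Definition label (k : 'I_5) : 'I_4 * 'I_4 -> 'I_16 := iter k rho \o base_label.

Definition copy_adj (k : 'I_5) : rel 'I_16 := image_rel (label k) grid_adj.

Definition grid_points : seq ('I_4 * 'I_4) := [seq (i, j) | i <- ords 3, j <- ords 3].

Lemma mem_grid_points p : p \in grid_points.
Proof. by case: p => i j; rewrite allpairs_f ?mem_ords. Qed.

Definition copy_arcs (k : 'I_5) : seq ('I_16 * 'I_16) :=
  [seq (label k ab.1, label k ab.2) | ab <- arcs grid_adj grid_points].

Lemma copy_adjE k x y : copy_adj k x y = ((x, y) \in copy_arcs k).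
Proof. exact: image_relE mem_grid_points. Qed.

Lemma label_inj k : injective (label k).
Proof.
have /allP/(_ k (mem_ords k))/allP label_check : all (fun k =>
    all (fun p => all (fun q => (label k p == label k q) ==> (p == q)) grid_points)
      grid_points) (ords 4).
  by vm_compute.
move=> p q /eqP eq_pq; apply/eqP.
by move: (label_check p (mem_grid_points p)) => /allP/(_ q (mem_grid_points q))/implyP; apply.
Qed.

Lemma copy_adj_disjoint k l x y : k != l -> copy_adj k x y -> ~~ copy_adj l x y.
Proof.
have /allP/(_ k (mem_ords k))/allP/(_ l (mem_ords l)) : all (fun k => all (fun l =>
    (k != l) ==> all (fun xy => xy \notin copy_arcs l) (copy_arcs k)) (ords 4)) (ords 4).
  by vm_compute.
by rewrite !copy_adjE => /implyP disj /disj/allP; apply.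
Qed.

Lemma copy_adj_cover x y : x != y -> exists k, copy_adj k x y.
Proof.
have /allP/(_ x (mem_ords x))/allP/(_ y (mem_ords y)) : all (fun x => all (fun y =>
    (x != y) ==> has (fun k => (x, y) \in copy_arcs k) (ords 4)) (ords 15)) (ords 15).
  by vm_compute.
by move=> /implyP cover /cover/hasP[k _]; exists k; rewrite copy_adjE.
Qed.

Theorem theorem4 :
  exists G : 'I_5 -> {set {set 'I_16}},
    (forall k, iso_to_grid (G k)) /\
    (forall k l, k != l -> [disjoint G k & G l]) /\
    \bigcup_(k < 5) G k = K_edges 16.
Proof.
exists (fun k => edge_set (copy_adj k)); split; [|split].
- by move=> k; exists (label k); split; [exact: label_inj | rewrite edge_set_image].
- move=> k l neq_kl; apply: disjoint_edge_set (image_rel_sym _ grid_adj_sym) _.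
  by move=> x y; exact: copy_adj_disjoint.
- apply: bigcup_edge_set => [k x y|]; last exact: copy_adj_cover.
  exact: image_rel_neq (@label_inj k) grid_adj_irr.
Qed.
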